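(* With notation as in the context, $\mathrm{REL}(\Gamma)=\mathrm{REL}_{\mathcal{W}}$.
   Context: $\Gamma$ is a geometrically finite, non-cocompact Fuchsian group acting on the upper half-plane $\mathbb{H}$, containing hyperbolic but no parabolic elements, with $\Gamma\backslash\mathbb{H}$ of infinite area, and whose ordinary set contains a neighborhood of $\infty$. For $g=\begin{bmatrix}a&b\\c&d\end{bmatrix}\in\mathrm{PSL}_2(\mathbb{R})$ with $c\neq0$ let $\mathrm{I}(g)=\{z\in\mathbb{H}:|cz+d|=1\}$ and $\mathrm{ext}\,\mathrm{I}(g)=\{z:|cz+d|>1\}$. Let $\mathcal{K}=\bigcap_{g\in\Gamma\setminus\{\mathrm{id}\}}\mathrm{ext}\,\mathrm{I}(g)$ and $\mathrm{REL}(\Gamma)$ the set of $\mathrm{I}(g)$, $g\in\Gamma\setminus\{\mathrm{id}\}$, such that $\mathrm{I}(g)\cap\partial\mathcal{K}$ contains more than one point ($\partial$ = boundary in $\mathbb{H}$); $\Gamma_{\mathrm{REL}}$ is the set of such $g$. With $\mathrm{pr}_\infty(x+iy)=x$, let $\alpha$ (resp. $\beta$) be the largest (resp. smallest) real number with $\partial\mathcal{K}\subseteq\mathrm{pr}_\infty^{-1}([\alpha,\beta])$, fix $\alpha'<\alpha$, $\beta'>\beta$, $\lambda=\beta'-\alpha'$, $t_\lambda=\begin{bmatrix}1&\lambda\\0&1\end{bmatrix}$, $\mathcal{W}=\mathcal{K}\cap\mathrm{pr}_\infty^{-1}((\alpha',\beta'))$, and $\Gamma_{\mathcal{W}}$ the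 group generated by $\Gamma_{\mathrm{REL}}\cup\{t_\lambda\}$ (a Fuchsian group). $\mathrm{REL}_{\mathcal{W}}$ is the set of isometric spheres $\mathrm{I}(g)$, $g\in\Gamma_{\mathcal{W}}$ not fixing $\infty$, such that $\mathrm{I}(g)\cap\partial\mathcal{W}$ contains more than one point. *)

From Stdlib Require List.
From HB Require Import structures.
From mathcomp Require Import all_boot all_order all_algebra.
From mathcomp Require Import all_classical all_reals all_analysis.
Set Implicit Arguments. Unset Strict Implicit. Unset Printing Implicit Defensive.
Import Order.TTheory GRing.Theory Num.Theory.
Import numFieldNormedType.Exports.
Local Open Scope classical_set_scope.
Local Open Scope ring_scope.

Section Hyperbolic.
Variable R : realType.

(* Points of the plane C = R^2 are pairs (x, y) = x + i y; the upper half-plane. *)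
Definition uhp : set (R * R) := [set p | 0 < p.2].

Definition ma (g : 'M[R]_2) := g ord0 ord0.
Definition mb (g : 'M[R]_2) := g ord0 ord_max.
Definition mc (g : 'M[R]_2) := g ord_max ord0.
Definition md (g : 'M[R]_2) := g ord_max ord_max.

(* Moebius action z |-> (a z + b) / (c z + d), written out in coordinates:
   (az+b)(c zbar + d) / |cz+d|^2. *)
Definition mob (g : 'M[R]_2) (p : R * R) : R * R :=
  let D := (mc g * p.1 + md g) ^+ 2 + (mc g * p.2) ^+ 2 in
  (((ma g * p.1 + mb g) * (mc g * p.1 + md g) + ma g * mc g * p.2 ^+ 2) / D,
   (ma g * md g - mb g * mc g) * p.2 / D).

Definition psl_id (g : 'M[R]_2) : Prop := g = 1 \/ g = - 1.

(* A subgroup of PSL_2(R) is represented by its full preimage in SL_2(R). *)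
Record psl_subgroup (G : set 'M[R]_2) : Prop := {
  psl_det : forall g, G g -> \det g = 1;
  psl_one : G 1;
  psl_mul : forall g h, G g -> G h -> G (g *m h);
  psl_inv : forall g, G g -> G (invmx g);
  psl_opp : forall g, G g -> G (- g) }.

Definition fuchsian (G : set 'M[R]_2) : Prop :=
  psl_subgroup G /\
  forall g, G g -> exists2 e : R, 0 < e &
    forall h, G h -> (forall i j, `|h i j - g i j| < e) -> h = g.

(* Closure/interior in R^2; boundary relative to the upper half-plane. *)
Definition bdH (A : set (R * R)) : set (R * R) :=
  uhp `&` (closure A `\` interior A).

(* Fundamental region in the sense of Katok (Fuchsian groups, 3.1). *)
Definition fundamental_region (G : set 'M[R]_2) (F : set (R * R)) : Prop :=
  [/\ F `<=` uhp, open F,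
      (forall g, G g -> ~ psl_id g -> (mob g @` F) `&` F = set0) &
      (forall z, uhp z -> exists g, exists w,
          [/\ G g, (closure F `&` uhp) w & mob g w = z])].

Inductive halfplane :=
  | HPright of R
  | HPleft of R
  | HPout of R & R
  | HPin of R & R.

Definition hp_ok (h : halfplane) : Prop :=
  match h with HPout _ r | HPin _ r => 0 < r | _ => True end.

Definition hp_set (h : halfplane) : set (R * R) :=
  match h with
  | HPright x0 => [set p | uhp p /\ x0 < p.1]
  | HPleft x0 => [set p | uhp p /\ p.1 < x0]
  | HPout c r => [set p | uhp p /\ r ^+ 2 < (p.1 - c) ^+ 2 + p.2 ^+ 2]
  | HPin c r => [set p | uhp p /\ (p.1 - c) ^+ 2 + p.2 ^+ 2 < r ^+ 2]
  end.

(* Geometrically finite: there is a convex fundamental region with finitely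
   many sides, i.e. a nonempty finite intersection of hyperbolic half-planes. *)
Definition geom_finite (G : set 'M[R]_2) : Prop :=
  exists s : seq halfplane, (forall h, List.In h s -> hp_ok h) /\
    let F := uhp `&` [set p | forall h, List.In h s -> hp_set h p] in
    F !=set0 /\ fundamental_region G F.

(* Gamma\H compact iff some compact subset of H meets every orbit. *)
Definition cocompact (G : set 'M[R]_2) : Prop :=
  exists C : set (R * R), [/\ compact C, C `<=` uhp &
    forall z, uhp z -> exists g w, [/\ G g, C w & mob g w = z]].

Definition leb2 := ((@lebesgue_measure R) \x (@lebesgue_measure R))%E.

Definition hyp_area (F : set (R * R)) : \bar R :=
  (\int[leb2]_(p in F) ((p.2 ^+ 2)^-1)%:E)%E.

(* Gamma\H has infinite area: the hyperbolic area of a fundamental region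
   (with null boundary) is infinite. *)
Definition infinite_area (G : set 'M[R]_2) : Prop :=
  forall F, fundamental_region G F ->
    leb2 (closure F `\` interior F) = 0%E -> hyp_area F = +oo%E.

Definition hyperbolic (g : 'M[R]_2) : Prop := 2 < `|\tr g|.
Definition parabolic (g : 'M[R]_2) : Prop := `|\tr g| = 2 /\ ~ psl_id g.

(* Limit set in R \cup {oo} (None = oo): accumulation points of an orbit
   along a sequence of distinct elements of PSL_2. *)
Definition limit_point (G : set 'M[R]_2) (xi : option R) : Prop :=
  exists z, uhp z /\ exists gs : nat -> 'M[R]_2,
    [/\ (forall n, G (gs n)),
        (forall n m, n <> m -> gs n <> gs m /\ gs n <> - gs m) &
        match xi with
        | Some x => (fun n => mob (gs n) z) @ \oo --> (x, 0)
        | None => forall M : R, \forall n \near \oo,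
                    M < (mob (gs n) z).1 ^+ 2 + (mob (gs n) z).2 ^+ 2
        end].

Definition ordinary (G : set 'M[R]_2) (xi : option R) : Prop := ~ limit_point G xi.

Definition ordinary_nbhs_infty (G : set 'M[R]_2) : Prop :=
  exists M : R, ordinary G None /\ forall x : R, M < `|x| -> ordinary G (Some x).

(* Isometric spheres (for c <> 0) *)
Definition isom_sphere (g : 'M[R]_2) : set (R * R) :=
  [set z | uhp z /\ (mc g * z.1 + md g) ^+ 2 + (mc g * z.2) ^+ 2 = 1].
Definition isom_ext (g : 'M[R]_2) : set (R * R) :=
  [set z | uhp z /\ 1 < (mc g * z.1 + md g) ^+ 2 + (mc g * z.2) ^+ 2].

Definition Kset (G : set 'M[R]_2) : set (R * R) :=
  [set z | uhp z /\ forall g, G g -> ~ psl_id g -> mc g != 0 -> isom_ext g z].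

Definition more_than_one (S : set (R * R)) : Prop :=
  exists z w, [/\ S z, S w & z <> w].

Definition Gamma_REL (G : set 'M[R]_2) : set 'M[R]_2 :=
  [set g | [/\ G g, ~ psl_id g, mc g != 0 &
              more_than_one (isom_sphere g `&` bdH (Kset G))]].

Definition REL (G : set 'M[R]_2) : set (set (R * R)) :=
  [set S | exists g, Gamma_REL G g /\ S = isom_sphere g].

(* t_l = [1 l; 0 1] *)
Definition transl (l : R) : 'M[R]_2 := 1%:M + l *: delta_mx ord0 ord_max.

(* subgroup of PSL_2(R) generated by S (full preimage in SL_2(R)) *)
Inductive gen (S : set 'M[R]_2) : 'M[R]_2 -> Prop :=
  | gen_base g : S g -> gen S g
  | gen_one : gen S 1
  | gen_opp g : gen S g -> gen S (- g)
  | gen_mul g h : gen S g -> gen S h -> gen S (g *m h)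
  | gen_inv g : gen S g -> gen S (invmx g).

Definition Wset (G : set 'M[R]_2) (a' b' : R) : set (R * R) :=
  Kset G `&` [set z | a' < z.1 < b'].

Definition Gamma_W (G : set 'M[R]_2) (a' b' : R) : set 'M[R]_2 :=
  gen (Gamma_REL G `|` [set transl (b' - a')]).

Definition REL_W (G : set 'M[R]_2) (a' b' : R) : set (set (R * R)) :=
  [set S | exists g, [/\ Gamma_W G a' b' g, mc g != 0,
             more_than_one (isom_sphere g `&` bdH (Wset G a' b')) &
             S = isom_sphere g]].

End Hyperbolic.

From HB Require Import structures.
From mathcomp Require Import all_boot all_order all_algebra.
From mathcomp Require Import all_classical all_reals all_analysis.
From mathcomp Require Import ring lra.
Import Order.TTheory GRing.Theory Num.Theory.
Import numFieldNormedType.Exports.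
Local Open Scope classical_set_scope.
Local Open Scope ring_scope.
Set Implicit Arguments. Unset Strict Implicit. Unset Printing Implicit Defensive.

(* Since the boundary of K lies in the strip alpha <= Re z <= beta, strictly
   inside alpha' < Re z < beta', the sets K and W agree near it, so boundary
   points of K are boundary points of W and REL(Gamma) is contained in REL_W.

   Conversely, every g in Gamma_W with c <> 0 has W in the exterior of I(g).
   Elements of Gamma with c = 0 are trivial (infinity is ordinary and there are
   no parabolics), and a point outside K has real part in [alpha, beta] (the
   vertical ray above it eventually enters K, by discreteness, so it crosses the
   boundary of K). Write g = t^n g_1 t^n_1 ... g_k t^n_k with nontrivial g_i in
   Gamma and n_i <> 0 for i < k, and follow a point of a translate of W (such
   points lie in K) from the right: every g_i maps a point of K out of K and
   lowers its height, and every t^n_i, n_i <> 0, moves a point outside K back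
   into K. Hence Im (g z) < Im z, that is |cz + d| > 1.

   So if I(g) meets the boundary of W in p <> q, then along I(g) every
   |c'z + d'|^2, g' in Gamma, is an affine function of Re z which is >= 1 at
   p and q. The open arc of I(g) between p and q therefore lies outside W,
   hence outside K, while the points above it lie in K: it is contained in the
   boundary of K. An element g' of Gamma showing that the midpoint of the arc
   is not in K has |c'z + d'| <= 1 there, hence = 1 at p and q, so that
   I(g') = I(g) and g' is in Gamma_REL. *)

Section Matrix2.
Variable R : realType.
Implicit Types (g h : 'M[R]_2) (l : R).

Lemma ord2P (i : 'I_2) : i = ord0 \/ i = ord_max.
Proof. by case: i => -[|[|//]] ?; [left | right]; apply: val_inj. Qed.

Lemma mx2_forall (P : R -> Prop) g :
  P (ma g) -> P (mb g) -> P (mc g) -> P (md g) -> forall i j, P (g i j).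
Proof. by move=> ? ? ? ? i j; case: (ord2P i) => ->; case: (ord2P j) => ->. Qed.

Lemma mx2P g h :
  ma g = ma h -> mb g = mb h -> mc g = mc h -> md g = md h -> g = h.
Proof.
move=> ? ? ? ?; apply/matrixP => i j.
by case: (ord2P i) => ->; case: (ord2P j) => ->.
Qed.

Lemma sum_ord2 (F : 'I_2 -> R) : \sum_(i < 2) F i = F ord0 + F ord_max.
Proof. by rewrite big_ord_recl big_ord1; congr (_ + F _); apply: val_inj. Qed.

Lemma maM g h : ma (g *m h) = ma g * ma h + mb g * mc h.
Proof. by rewrite /ma !mxE sum_ord2. Qed.
Lemma mbM g h : mb (g *m h) = ma g * mb h + mb g * md h.
Proof. by rewrite /mb !mxE sum_ord2. Qed.
Lemma mcM g h : mc (g *m h) = mc g * ma h + md g * mc h.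
Proof. by rewrite /mc !mxE sum_ord2. Qed.
Lemma mdM g h : md (g *m h) = mc g * mb h + md g * md h.
Proof. by rewrite /md !mxE sum_ord2. Qed.

Lemma ma1 : ma (1 : 'M[R]_2) = 1. Proof. by rewrite /ma !mxE. Qed.
Lemma mb1 : mb (1 : 'M[R]_2) = 0. Proof. by rewrite /mb !mxE. Qed.
Lemma mc1 : mc (1 : 'M[R]_2) = 0. Proof. by rewrite /mc !mxE. Qed.
Lemma md1 : md (1 : 'M[R]_2) = 1. Proof. by rewrite /md !mxE. Qed.

Lemma maN g : ma (- g) = - ma g. Proof. by rewrite /ma !mxE. Qed.
Lemma mbN g : mb (- g) = - mb g. Proof. by rewrite /mb !mxE. Qed.
Lemma mcN g : mc (- g) = - mc g. Proof. by rewrite /mc !mxE. Qed.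
Lemma mdN g : md (- g) = - md g. Proof. by rewrite /md !mxE. Qed.

Lemma ma_transl l : ma (transl l) = 1. Proof. by rewrite /ma !mxE /=; ring. Qed.
Lemma mb_transl l : mb (transl l) = l. Proof. by rewrite /mb !mxE /=; ring. Qed.
Lemma mc_transl l : mc (transl l) = 0. Proof. by rewrite /mc !mxE /=; ring. Qed.
Lemma md_transl l : md (transl l) = 1. Proof. by rewrite /md !mxE /=; ring. Qed.

Definition mx2E := (maM, mbM, mcM, mdM, ma1, mb1, mc1, md1, maN, mbN, mcN, mdN,
  ma_transl, mb_transl, mc_transl, md_transl).

Lemma det_mx2 g : \det g = ma g * md g - mb g * mc g.
Proof.
rewrite (expand_det_row g ord0) sum_ord2 /cofactor !det_mx11 /ma /mb /mc /md !mxE.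
have -> : lift ord0 (0 : 'I_1) = ord_max :> 'I_2 by apply: val_inj.
have -> : lift ord_max (0 : 'I_1) = ord0 :> 'I_2 by apply: val_inj.
by rewrite expr0 expr1 /=; ring.
Qed.

Lemma trace_mx2 g : \tr g = ma g + md g.
Proof. by rewrite /mxtrace sum_ord2. Qed.

Lemma det_transl l : \det (transl l) = 1.
Proof. by rewrite det_mx2 !mx2E; ring. Qed.

Lemma translD l l' : transl l *m transl l' = transl (l + l').
Proof. by apply: mx2P; rewrite !mx2E; ring. Qed.

Lemma transl0 : transl 0 = 1 :> 'M[R]_2.
Proof. by apply: mx2P; rewrite !mx2E. Qed.

Definition adj2 g : 'M[R]_2 := \matrix_(i, j)
  match nat_of_ord i, nat_of_ord j with
  | 0, 0 => md g | 0, _ => - mb g | _, 0 => - mc g | _, _ => ma g end%N.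

Lemma ma_adj2 g : ma (adj2 g) = md g. Proof. by rewrite /ma !mxE. Qed.
Lemma mb_adj2 g : mb (adj2 g) = - mb g. Proof. by rewrite /mb !mxE. Qed.
Lemma mc_adj2 g : mc (adj2 g) = - mc g. Proof. by rewrite /mc !mxE. Qed.
Lemma md_adj2 g : md (adj2 g) = ma g. Proof. by rewrite /md !mxE. Qed.

Definition adj2E := (ma_adj2, mb_adj2, mc_adj2, md_adj2).

Lemma mulmx_adj2 g : \det g = 1 -> g *m adj2 g = 1.
Proof. by rewrite det_mx2 => dg; apply: mx2P; rewrite !(mx2E, adj2E) -?dg; ring. Qed.

Lemma invmx_adj2 g : \det g = 1 -> invmx g = adj2 g.
Proof.
move=> dg; have gU : g \in unitmx by rewrite unitmxE dg unitr1.
by rewrite -[RHS]mul1mx -(mulVmx gU) -mulmxA mulmx_adj2 // mulmx1.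
Qed.

Lemma mul_adj2mx g : \det g = 1 -> adj2 g *m g = 1.
Proof. by move=> dg; rewrite -invmx_adj2 // mulVmx // unitmxE dg unitr1. Qed.

Lemma adj2M g h : adj2 (g *m h) = adj2 h *m adj2 g.
Proof. by apply: mx2P; rewrite !(mx2E, adj2E); ring. Qed.

Lemma adj21 : adj2 1 = 1.
Proof. by apply: mx2P; rewrite !(mx2E, adj2E) ?oppr0. Qed.

Lemma adj2_transl l : adj2 (transl l) = transl (- l).
Proof. by apply: mx2P; rewrite !(mx2E, adj2E) ?oppr0. Qed.

End Matrix2.

Section PSL.
Variable R : realType.
Implicit Types (g h : 'M[R]_2).

Lemma psl_idN g : psl_id (- g) -> psl_id g.
Proof. by case=> e; [right | left]; rewrite -[g]opprK e ?opprK. Qed.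

Lemma psl_id_mulmx g h : psl_id g -> g *m h = h \/ g *m h = - h.
Proof. by case=> ->; [left | right]; rewrite ?mulNmx mul1mx. Qed.

Lemma psl_id_adj2 g : \det g = 1 -> psl_id (adj2 g) -> psl_id g.
Proof.
move=> dg [] e; have := mulmx_adj2 dg; rewrite e ?mulmxN mulmx1 => gE.
  by left.
by right; rewrite -[g]opprK gE.
Qed.

Definition psl_injective (gs : nat -> 'M[R]_2) :=
  forall n m, n <> m -> gs n <> gs m /\ gs n <> - gs m.

Lemma psl_injective_mono (f : 'M[R]_2 -> R) gs : (forall g, f (- g) = f g) ->
  (forall n m, (n < m)%N -> f (gs n) < f (gs m)) -> psl_injective gs.
Proof.
move=> fN mono.
suff lt_neq n m : (n < m)%N -> gs n <> gs m /\ gs n <> - gs m.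
  move=> n m /eqP; rewrite neq_ltn => /orP[/lt_neq // | /lt_neq [nm nNm]].
  by split=> e; [apply: nm | apply: nNm; rewrite e opprK].
move=> /mono nm; split=> e; move: nm; rewrite e ?fN ltxx //.
Qed.

End PSL.

Section Moebius.
Variable R : realType.
Implicit Types (g h : 'M[R]_2) (z : R * R).

Definition den g z := (mc g * z.1 + md g) ^+ 2 + (mc g * z.2) ^+ 2.

Lemma den_gt0 g z : \det g = 1 -> 0 < z.2 -> 0 < den g z.
Proof.
rewrite det_mx2 /den => dg z2.
have [c0|c0] := eqVneq (mc g) 0.
  have d0 : md g != 0.
    by apply/eqP => d0; move: dg; rewrite c0 d0 !mulr0 subr0 => /eqP; rewrite eq_sym oner_eq0.
  by rewrite c0 !mul0r add0r expr0n addr0 exprn_even_gt0.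
by rewrite ltr_pwDr ?sqr_ge0 // exprn_even_gt0 // mulf_neq0 // gt_eqF.
Qed.

Lemma denM g h z : den h z != 0 -> den (g *m h) z = den g (mob h z) * den h z.
Proof. by rewrite /den /mob /= mcM mdM => hz; field. Qed.

Lemma den_adj2_mob g z : \det g = 1 -> uhp z -> den (adj2 g) (mob g z) * den g z = 1.
Proof.
move=> dg z2; rewrite -denM ?mul_adj2mx ?lt0r_neq0 ?den_gt0 //.
by rewrite /den !mx2E; ring.
Qed.

Lemma mob_im g z : \det g = 1 -> (mob g z).2 = z.2 / den g z.
Proof. by move=> dg; rewrite /mob /= -det_mx2 dg mul1r. Qed.

Lemma mob_uhp g z : \det g = 1 -> uhp z -> uhp (mob g z).
Proof. by move=> dg z2; change (0 < (mob g z).2); rewrite mob_im // divr_gt0 // den_gt0. Qed.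

Definition num_re g z :=
  (ma g * z.1 + mb g) * (mc g * z.1 + md g) + ma g * mc g * z.2 ^+ 2.

Lemma mob_re g z : (mob g z).1 = num_re g z / den g z.
Proof. by []. Qed.

Lemma num_reM g h z :
  den h z != 0 -> num_re (g *m h) z = num_re g (mob h z) * den h z.
Proof. by rewrite /den /num_re /mob /= !mx2E => hz; field. Qed.

Lemma mobM g h z : \det g = 1 -> \det h = 1 -> uhp z ->
  mob (g *m h) z = mob g (mob h z).
Proof.
move=> dg dh z2.
have hz := den_gt0 dh z2; have ghz := den_gt0 dg (mob_uhp dh z2).
have dgh : \det (g *m h) = 1 by rewrite det_mulmx dg dh mulr1.
apply: injective_projections.
  by rewrite !mob_re num_reM ?denM ?gt_eqF //; field; rewrite !gt_eqF.
by rewrite !mob_im // denM ?gt_eqF //; field; rewrite !gt_eqF.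
Qed.

Lemma mob_transl (l : R) z : mob (transl l) z = (z.1 + l, z.2).
Proof.
rewrite /mob !mx2E; have -> : (0 * z.1 + 1) ^+ 2 + (0 * z.2) ^+ 2 = 1 :> R by ring.
by congr pair; field.
Qed.

Lemma mob1 z : mob 1 z = z.
Proof. by rewrite -(transl0 R) mob_transl addr0; case: z. Qed.

Lemma den_gt1_im g z : \det g = 1 -> uhp z -> (1 < den g z <-> (mob g z).2 < z.2).
Proof.
move=> dg z2; have hz := den_gt0 dg z2; have y0 : 0 < z.2 := z2.
by rewrite mob_im // ltr_pdivrMr //; split => h; nra.
Qed.

Lemma mob_norm2 g z : \det g = 1 -> uhp z ->
  (mob g z).1 ^+ 2 + (mob g z).2 ^+ 2 =
  ((ma g * z.1 + mb g) ^+ 2 + (ma g * z.2) ^+ 2) / den g z.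
Proof.
move=> dg z2; have := den_gt0 dg z2.
by rewrite /mob /den /= => hz; field; rewrite gt_eqF.
Qed.

Lemma den_continuous g : continuous (den g).
Proof.
move=> z.
have re : (fun w : R * R => mc g * w.1 + md g) @ z --> mc g * z.1 + md g.
  by apply: cvgD; [apply: cvgM; [exact: cvg_cst | exact: cvg_fst] | exact: cvg_cst].
have im : (fun w : R * R => mc g * w.2) @ z --> mc g * z.2.
  by apply: cvgM; [exact: cvg_cst | exact: cvg_snd].
by apply: cvgD; apply: cvgM.
Qed.

End Moebius.

Lemma convex_sqr_lt1 (R : realFieldType) (a b t : R) :
  a ^+ 2 < 1 -> b ^+ 2 < 1 -> 0 <= t <= 1 -> (t * a + (1 - t) * b) ^+ 2 < 1.
Proof.
move=> ha hb /andP[t0 t1].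
have : t * a ^+ 2 <= t * Num.max (a ^+ 2) (b ^+ 2) by rewrite ler_wpM2l ?le_max ?lexx.
have : (1 - t) * b ^+ 2 <= (1 - t) * Num.max (a ^+ 2) (b ^+ 2).
  by rewrite ler_wpM2l ?subr_ge0 // le_max lexx orbT.
have : Num.max (a ^+ 2) (b ^+ 2) < 1 by rewrite gt_max ha hb.
have : 0 <= t * (1 - t) * (a - b) ^+ 2 by rewrite mulr_ge0 ?sqr_ge0 // mulr_ge0 // subr_ge0.
have -> : t * (1 - t) * (a - b) ^+ 2 =
  t * a ^+ 2 + (1 - t) * b ^+ 2 - (t * a + (1 - t) * b) ^+ 2 by ring.
lra.
Qed.

Section IsometricSpheres.
Variable R : realType.
Implicit Types (g h : 'M[R]_2) (z p q : R * R).

Lemma den_on_sphere g h z : mc g != 0 -> den g z = 1 ->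
  den h z = (mc h * z.1 + md h) ^+ 2 + mc h ^+ 2 * (1 - (mc g * z.1 + md g) ^+ 2) / mc g ^+ 2.
Proof.
move=> cg gz; have <- : (mc g * z.2) ^+ 2 = 1 - (mc g * z.1 + md g) ^+ 2.
  by move: gz; rewrite /den; lra.
by rewrite /den; field.
Qed.

(* The x^2-terms in [den_on_sphere] cancel, leaving an affine function of x. *)
Lemma den_affine_on_sphere g h p q z (t : R) : mc g != 0 ->
  den g p = 1 -> den g q = 1 -> den g z = 1 -> z.1 = t * p.1 + (1 - t) * q.1 ->
  den h z = t * den h p + (1 - t) * den h q.
Proof.
move=> cg gp gq gz e.
by rewrite !(den_on_sphere h cg) // e; field.
Qed.

Lemma isom_sphere_re_inj g p q : mc g != 0 ->
  isom_sphere g p -> isom_sphere g q -> p.1 = q.1 -> p = q.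
Proof.
move=> cg [p2 gp] [q2 gq] e; have y0 : 0 < p.2 := p2; have y1 : 0 < q.2 := q2.
have /eqP : (mc g * p.2) ^+ 2 = (mc g * q.2) ^+ 2 by move: gp gq; rewrite /den e; lra.
rewrite eqf_sqr -mulrN => /orP[] /eqP /(mulfI cg) e2; first exact: injective_projections.
by exfalso; lra.
Qed.

Lemma isom_sphere_sub g h p q : mc g != 0 -> p.1 != q.1 ->
  isom_sphere g p -> isom_sphere g q -> isom_sphere h p -> isom_sphere h q ->
  isom_sphere g `<=` isom_sphere h.
Proof.
move=> cg pq [_ gp] [_ gq] [_ hp] [_ hq] z [z2 gz]; split => //; change (den h z = 1).
have pq0 : p.1 - q.1 != 0 by rewrite subr_eq0.
rewrite (den_affine_on_sphere h (t := (z.1 - q.1) / (p.1 - q.1)) cg gp gq gz).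
  by rewrite [den h p]hp [den h q]hq; ring.
by field.
Qed.

Lemma isom_sphere_eq g h p q : mc g != 0 -> mc h != 0 -> p.1 != q.1 ->
  isom_sphere g p -> isom_sphere g q -> isom_sphere h p -> isom_sphere h q ->
  isom_sphere g = isom_sphere h.
Proof.
move=> cg ch pq gp gq hp hq.
by apply/seteqP; split; [apply: (isom_sphere_sub cg pq) | apply: (isom_sphere_sub ch pq)].
Qed.

Definition sphere_arc g p q (t : R) : R * R :=
  (t * p.1 + (1 - t) * q.1,
   Num.sqrt (1 - (mc g * (t * p.1 + (1 - t) * q.1) + md g) ^+ 2) / `|mc g|).

Lemma sphere_arcP g p q (t : R) : mc g != 0 ->
  isom_sphere g p -> isom_sphere g q -> 0 <= t <= 1 -> isom_sphere g (sphere_arc g p q t).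
Proof.
move=> cg [p2 gp] [q2 gq] t01.
set a := mc g * p.1 + md g; set b := mc g * q.1 + md g.
have ha : a ^+ 2 < 1.
  have : 0 < (mc g * p.2) ^+ 2 by rewrite exprn_even_gt0 // mulf_neq0 // gt_eqF.
  by move: gp; rewrite /den -/a; lra.
have hb : b ^+ 2 < 1.
  have : 0 < (mc g * q.2) ^+ 2 by rewrite exprn_even_gt0 // mulf_neq0 // gt_eqF.
  by move: gq; rewrite /den -/b; lra.
have ex : mc g * (t * p.1 + (1 - t) * q.1) + md g = t * a + (1 - t) * b by rewrite /a /b; ring.
have hs : 0 < 1 - (t * a + (1 - t) * b) ^+ 2 by rewrite subr_gt0 convex_sqr_lt1.
have cn : 0 < `|mc g| by rewrite normr_gt0.
rewrite /sphere_arc ex; split; first by rewrite /uhp /= divr_gt0 // sqrtr_gt0.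
rewrite /den /= ex exprMn expr_div_n sqr_sqrtr ?ltW // -normrX ger0_norm ?sqr_ge0 //.
by field.
Qed.

End IsometricSpheres.

Lemma bernoulli_ineq (R : realFieldType) (h : R) (n : nat) :
  0 <= h -> 1 + n%:R * h <= (1 + h) ^+ n.
Proof.
move=> h0; elim: n => [|n IH]; first by rewrite mul0r addr0 expr0.
have : 0 <= ((1 + h) ^+ n - (1 + n%:R * h)) * h by rewrite mulr_ge0 ?subr_ge0.
have : 0 <= n%:R * h * h by rewrite !mulr_ge0.
by rewrite exprS -natr1; nra.
Qed.

Section FuchsianGroup.
Variable R : realType.
Implicit Types (g h : 'M[R]_2) (z : R * R).
Variable G : set 'M[R]_2.
Hypothesis Gfuchsian : fuchsian G.

Lemma G_det g : G g -> \det g = 1. Proof. exact: (psl_det Gfuchsian.1). Qed.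
Lemma G1 : G 1. Proof. exact: (psl_one Gfuchsian.1). Qed.
Lemma GM g h : G g -> G h -> G (g *m h). Proof. exact: (psl_mul Gfuchsian.1). Qed.
Lemma GN g : G g -> G (- g). Proof. exact: (psl_opp Gfuchsian.1). Qed.
Lemma G_adj2 g : G g -> G (adj2 g).
Proof. by move=> Gg; rewrite -invmx_adj2 ?G_det //; apply: (psl_inv Gfuchsian.1). Qed.

Lemma G_expr g n : G g -> G (g ^+ n).
Proof.
move=> Gg; elim: n => [|n IH]; rewrite ?expr0 ?exprS -?mulmxE; [exact: G1 | exact: GM].
Qed.

Hypothesis infty_ordinary : ordinary G None.

Lemma orbit_not_escaping z gs : uhp z -> (forall n, G (gs n)) -> psl_injective gs ->
  ~ (forall M : R, \forall n \near \oo, M < (mob (gs n) z).1 ^+ 2 + (mob (gs n) z).2 ^+ 2).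
Proof.
by move=> z2 Ggs gs_inj esc; apply: infty_ordinary; exists z; split; last exists gs.
Qed.

Lemma expr_mc0 g n : mc g = 0 ->
  [/\ mc (g ^+ n) = 0, ma (g ^+ n) = ma g ^+ n & md (g ^+ n) = md g ^+ n].
Proof.
move=> c0; elim: n => [|n [cn an dn]]; first by rewrite !expr0 !mx2E.
by rewrite !exprS -mulmxE !mx2E cn an dn c0; split; ring.
Qed.

(* The powers of [g = (a b; 0 d)] with [a^2 > 1] push [i] to infinity:
   Im (g^n i) = a^(2n). *)
Lemma mc0_expanding_false g : G g -> mc g = 0 -> 1 < ma g ^+ 2 -> False.
Proof.
move=> Gg c0 a1; have := G_det Gg; rewrite det_mx2 c0 mulr0 subr0 => ad1.
pose A := ma g ^+ 2.
have AD : A * md g ^+ 2 = 1 by rewrite -exprMn ad1 expr1n.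
have d0 : md g != 0.
  by apply/eqP => d0; move: ad1; rewrite d0 mulr0 => /eqP; rewrite eq_sym oner_eq0.
have im n : (mob (g ^+ n) (0, 1)).2 = A ^+ n.
  have [cn an dn] := expr_mc0 n c0.
  have dgn : \det (g ^+ n) = 1 by apply/G_det/G_expr.
  rewrite mob_im // /den cn dn /= !mul0r add0r expr0n addr0 -exprM mulnC exprM.
  by rewrite -(expr1n _ n) -AD exprMn mulfK // !expf_neq0.
have i2 : uhp ((0 : R), (1 : R)) by exact: ltr01.
apply: (orbit_not_escaping i2 (fun n => G_expr n Gg)).
- apply: (psl_injective_mono (f := fun h => ma h ^+ 2)) => [h|n m nm].
    by rewrite maN sqrrN.
  have [_ an _] := expr_mc0 n c0; have [_ am _] := expr_mc0 m c0.
  by rewrite an am -!exprM mulnC [(m * 2)%N]mulnC !exprM ltr_eXn2l // (lt_trans ltr01).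
- have A1 : 0 < A - 1 by rewrite subr_gt0.
  move=> M; near=> n.
  have : M / (A - 1) <= n%:R by near: n; apply: nbhs_infty_ger.
  rewrite ler_pdivrMr // => Mn.
  have := bernoulli_ineq n (ltW A1); rewrite [1 + (A - 1)]addrC subrK -im => An.
  have y1 : 1 <= (mob (g ^+ n) (0, 1)).2 by rewrite im exprn_ege1 // ltW.
  by have := sqr_ge0 (mob (g ^+ n) (0, 1)).1; nra.
Unshelve. all: by end_near.
Qed.

Hypothesis no_parabolic : forall g, G g -> ~ parabolic g.

Lemma mc0_psl_id g : G g -> mc g = 0 -> psl_id g.
Proof.
move=> Gg c0; have := G_det Gg; rewrite det_mx2 c0 mulr0 subr0 => ad1.
have a2d2 : ma g ^+ 2 * md g ^+ 2 = 1 by rewrite -exprMn ad1 expr1n.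
case: (ltgtP (ma g ^+ 2) 1) => a2.
- exfalso; apply: (@mc0_expanding_false (adj2 g)); rewrite ?adj2E ?c0 ?oppr0 //.
    exact: G_adj2.
  by have := sqr_ge0 (ma g); nra.
- by exfalso; apply: (mc0_expanding_false Gg).
- apply: contrapT => gN1; apply: (no_parabolic Gg); split => //.
  move/eqP: a2; rewrite sqrf_eq1 trace_mx2 => /orP[] /eqP aE.
    have dE : md g = 1 by rewrite -ad1 aE mul1r.
    by rewrite aE dE ger0_norm.
  have dE : md g = -1 by rewrite -ad1 aE mulN1r opprK.
  by rewrite aE dE -opprD normrN ger0_norm.
Qed.

End FuchsianGroup.

Section Pigeonhole.
Variable R : realType.

Lemma floor_eq_close (u v : R) : Num.floor u = Num.floor v -> `|u - v| < 1.
Proof.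
move=> e; have := floor_le u; have := floorD1_gt u.
have := floor_le v; have := floorD1_gt v.
by rewrite e ltr_norml; lra.
Qed.

Definition grid_cell (B eps x : R) : 'I_(`|Num.floor (2 * B / eps)|%N).+1 :=
  inord `|Num.floor ((x + B) / eps)|%N.

Lemma grid_cell_close (B eps x y : R) : 0 < eps -> `|x| <= B -> `|y| <= B ->
  grid_cell B eps x = grid_cell B eps y -> `|x - y| < eps.
Proof.
move=> e0 xB yB.
have floor_ge0 u : `|u| <= B -> (0 <= Num.floor ((u + B) / eps))%R.
  by rewrite ler_norml floor_ge_int => /andP[u1 _]; apply: divr_ge0; [lra | exact: ltW].
have cellE u : `|u| <= B -> grid_cell B eps u = `|Num.floor ((u + B) / eps)|%N :> nat.
  move=> uB; have := uB; rewrite ler_norml => /andP[u1 u2].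
  have h1 : (u + B) / eps <= 2 * B / eps by rewrite ler_pM2r ?invr_gt0 //; lra.
  rewrite inordK // ltnS -lez_nat !gez0_abs ?floor_ge0 //.
    exact: le_floor.
  exact: le_trans (floor_ge0 u uB) (le_floor h1).
move=> /(congr1 (@nat_of_ord _)); rewrite !cellE // => /(congr1 Posz).
rewrite !gez0_abs ?floor_ge0 // => /floor_eq_close.
have -> : (x + B) / eps - (y + B) / eps = (x - y) / eps by field; rewrite gt_eqF.
by rewrite normrM [`|eps^-1|]gtr0_norm ?invr_gt0 // ltr_pdivrMr // mul1r.
Qed.

Lemma pigeonhole_close p q (F : nat -> 'M[R]_(p, q)) (I : nat -> Prop) (B eps : R) :
  0 < eps -> (forall N, exists n, (N <= n)%N /\ I n) ->
  (forall n, I n -> forall i j, `|F n i j| <= B) ->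
  exists n m, [/\ n <> m, I n, I m & forall i j, `|F n i j - F m i j| < eps].
Proof.
move=> e0 /choice[next nextP] FB.
pose fix sub k := if k is k'.+1 then next (sub k').+1 else next 0.
have subI k : I (sub k) by case: k => [|k]; apply: (nextP _).2.
have sub_inj : injective sub.
  have sub_lt : {homo sub : k l / (k < l)%N}.
    by apply: homo_ltn => [y x z|k]; [exact: ltn_trans | exact: (nextP _).1].
  move=> k l e; apply/eqP; apply: contraT.
  by rewrite neq_ltn => /orP[] /sub_lt; rewrite e ltnn.
pose T := {ffun 'I_p * 'I_q -> 'I_(`|Num.floor (2 * B / eps)|%N).+1}.
pose cells (k : 'I_(#|T|).+1) : T := [ffun ij => grid_cell B eps (F (sub k) ij.1 ij.2)].
have [k [l [kl kl_neq]]] : exists k l, cells k = cells l /\ k <> l.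
  apply: contrapT => inj; have /leq_card : injective cells.
    by move=> k l e; apply: contrapT => kl; apply: inj; exists k, l.
  by rewrite card_ord ltnn.
exists (sub k), (sub l); split => //.
- by move=> /sub_inj /val_inj.
- move=> i j; apply: (grid_cell_close e0); [exact: FB | exact: FB |].
  by have := congr1 (fun f : T => f (i, j)) kl; rewrite !ffunE.
Qed.

End Pigeonhole.

Lemma normr_le_1Dsqr (R : realDomainType) (x K : R) : x ^+ 2 <= K -> `|x| <= 1 + K.
Proof.
move=> xK; have : `|x| ^+ 2 <= K by rewrite real_normK ?num_real.
by have := normr_ge0 x; nra.
Qed.

Lemma entries_bound (R : realType) (g : 'M[R]_2) (x0 M : R) :
  \det g = 1 -> den g (x0, 1) <= 1 ->
  (mob g (x0, 1)).1 ^+ 2 + (mob g (x0, 1)).2 ^+ 2 <= M ->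
  forall i j, `|g i j| <= (2 + `|M|) * (1 + `|x0|).
Proof.
move=> dg gz gM; have z2 : uhp (x0, 1) by exact: ltr01.
have D0 := den_gt0 dg z2.
move: gM; rewrite mob_norm2 // ler_pdivrMr //= mulr1 => gM.
have MK : M * den g (x0, 1) <= `|M|.
  by have := ler_norm M; have := normr_ge0 M; nra.
move: gz; rewrite /den /= mulr1 => gz.
have ha := sqr_ge0 (ma g); have hv := sqr_ge0 (ma g * x0 + mb g).
have hc := sqr_ge0 (mc g); have hw := sqr_ge0 (mc g * x0 + md g).
have /normr_le_1Dsqr a1 : ma g ^+ 2 <= `|M| by lra.
have /normr_le_1Dsqr v1 : (ma g * x0 + mb g) ^+ 2 <= `|M| by lra.
have /normr_le_1Dsqr c1 : mc g ^+ 2 <= 1 by lra.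
have /normr_le_1Dsqr w1 : (mc g * x0 + md g) ^+ 2 <= 1 by lra.
have M0 := normr_ge0 M; have x00 := normr_ge0 x0.
apply: (@mx2_forall _ (fun v => `|v| <= (2 + `|M|) * (1 + `|x0|))); first by nra.
- have -> : mb g = (ma g * x0 + mb g) - ma g * x0 by ring.
  apply: le_trans (ler_normB _ _) _; rewrite normrM.
  by have := normr_ge0 (ma g); nra.
- by nra.
- have -> : md g = (mc g * x0 + md g) - mc g * x0 by ring.
  apply: le_trans (ler_normB _ _) _; rewrite normrM.
  by have := normr_ge0 (mc g); nra.
Qed.

Section Discreteness.
Variable R : realType.
Implicit Types (g h : 'M[R]_2).
Variable G : set 'M[R]_2.
Hypothesis Gfuchsian : fuchsian G.

Lemma fuchsian_separated (B : R) : 0 <= B -> exists2 eps : R, 0 < eps &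
  forall g h, G g -> G h -> (forall i j, `|g i j| <= B) ->
    (forall i j, `|g i j - h i j| < eps) -> g = h.
Proof.
move=> B0; have [e e0 near1] := Gfuchsian.2 1 (G1 Gfuchsian).
have B1 : 0 < 2 * B + 1 by rewrite ltr_wpDl ?mulr_ge0.
exists (e / (2 * B + 1)) => [|g h Gg Gh gB gh]; first by rewrite divr_gt0.
have adjB : forall i j, `|adj2 g i j| <= B.
  apply: (@mx2_forall _ (fun v => `|v| <= B)); rewrite adj2E ?normrN.
  - exact: gB ord_max ord_max.
  - exact: gB ord0 ord_max.
  - exact: gB ord_max ord0.
  - exact: gB ord0 ord0.
suff : adj2 g *m h = 1.
  by move/(congr1 (mulmx g)); rewrite mulmxA mulmx_adj2 ?(G_det Gfuchsian) // mul1mx mulmx1.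
apply: near1 => [|i j]; first exact: (GM Gfuchsian (G_adj2 Gfuchsian Gg) Gh).
have -> : (adj2 g *m h) i j - (1 : 'M[R]_2) i j = (adj2 g *m (h - g)) i j.
  by rewrite mulmxBr mul_adj2mx ?(G_det Gfuchsian) // !mxE.
rewrite mxE sum_ord2; apply: le_lt_trans (ler_normD _ _) _; rewrite !normrM.
have hg k : `|(h - g) k j| < e / (2 * B + 1) by rewrite !mxE distrC.
have := adjB i ord0; have := adjB i ord_max; have := hg ord0; have := hg ord_max.
have : e / (2 * B + 1) * (2 * B + 1) = e by rewrite divfK ?gt_eqF.
have := normr_ge0 ((h - g) ord0 j); have := normr_ge0 ((h - g) ord_max j).
have := normr_ge0 (adj2 g i ord0); have := normr_ge0 (adj2 g i ord_max).
nra.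
Qed.

Hypothesis infty_ordinary : ordinary G None.

Lemma den_le1_seq_false (x0 : R) gs : (forall n, G (gs n)) -> psl_injective gs ->
  (forall n, den (gs n) (x0, 1) <= 1) -> False.
Proof.
move=> Ggs gs_inj gs_den; have z2 : uhp (x0, 1) by exact: ltr01.
have /existsNP[M not_esc] := orbit_not_escaping infty_ordinary z2 Ggs gs_inj.
pose I n := (mob (gs n) (x0, 1)).1 ^+ 2 + (mob (gs n) (x0, 1)).2 ^+ 2 <= M.
have I_inf N : exists n, (N <= n)%N /\ I n.
  apply: contrapT => noI; apply: not_esc; exists N => // n /= Nn.
  by rewrite ltNge; apply/negP => nI; apply: noI; exists n.
set B := (2 + `|M|) * (1 + `|x0|).
have B0 : 0 <= B by rewrite mulr_ge0 // addr_ge0.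
have gsB n : I n -> forall i j, `|gs n i j| <= B.
  by move=> In; apply: (entries_bound (G_det Gfuchsian (Ggs n)) (gs_den n)).
have [eps eps0 sep] := fuchsian_separated B0.
have [n [m [nm In Im close]]] := pigeonhole_close eps0 I_inf gsB.
by have [+ _] := gs_inj n m nm; apply; apply: sep => //; apply: gsB.
Qed.

Lemma mc_bounded_below (x0 : R) : exists2 rho : R, 0 < rho &
  forall g, G g -> mc g != 0 -> den g (x0, 1) <= 1 -> rho <= `|mc g|.
Proof.
apply: contrapT => small.
have step (r : R) : exists g, 0 < r ->
    [/\ G g, mc g != 0, den g (x0, 1) <= 1 & `|mc g| < r].
  have [r0|] := ltrP 0 r; last by exists 1.
  apply: contrapT => none; apply: small; exists r => // g Gg cg gden.
  by rewrite leNgt; apply/negP => gr; apply: none; exists g.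
have [f fP] := choice step.
pose fix gs n := if n is n'.+1 then f `|mc (gs n')| else f 1.
have gsP n : [/\ G (gs n), mc (gs n) != 0 & den (gs n) (x0, 1) <= 1].
  elim: n => [|n [_ cn _]]; first by have [] := fP 1 ltr01.
  have cn0 : 0 < `|mc (gs n)| by rewrite normr_gt0.
  by have [] := fP _ cn0.
have gs_dec n : `|mc (gs n.+1)| < `|mc (gs n)|.
  have [_ cn _] := gsP n; have cn0 : 0 < `|mc (gs n)| by rewrite normr_gt0.
  by have [] := fP _ cn0.
apply: (@den_le1_seq_false x0 gs) => [n||n]; try by have [] := gsP n.
apply: (psl_injective_mono (f := fun g => - `|mc g|)) => [g|]; first by rewrite mcN normrN.
apply: (@homo_ltn _ (fun n => - `|mc (gs n)|) <%R) => [y x z|k]; first exact: lt_trans.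
by rewrite ltrN2.
Qed.

End Discreteness.

Section VerticalRays.
Variable R : realType.
Implicit Types (A : set (R * R)) (p u : R * R).

Lemma nbhs_boxP p (B : set (R * R)) : nbhs p B <->
  exists2 e : R, 0 < e & forall q, `|q.1 - p.1| < e -> `|q.2 - p.2| < e -> B q.
Proof.
split=> [/nbhs_ballP[e e0 eB]|[e e0 eB]]; [|apply/nbhs_ballP]; exists e => //.
  by move=> q q1 q2; apply: eB; split; rewrite /ball /= distrC.
by move=> q [/= q1 q2]; apply: eB; rewrite distrC.
Qed.

Lemma nbhs_strip (a b : R) p : a < p.1 < b -> nbhs p [set q | a < q.1 < b].
Proof.
move=> /andP[a_lt lt_b]; apply/nbhs_boxP; exists (Num.min (p.1 - a) (b - p.1)) => [|q].
  by rewrite lt_min !subr_gt0 a_lt lt_b.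
by rewrite lt_min !ltr_norml => /andP[/andP[q1 _] /andP[_ q1']] _; apply/andP; split; lra.
Qed.

Lemma closure_from_above A (x y : R) : (forall s, 0 < s -> A (x, y + s)) -> closure A (x, y).
Proof.
move=> above B /nbhs_boxP[e e0 eB]; have e2 : 0 < e / 2 by rewrite divr_gt0.
exists (x, y + e / 2); split; first exact: above.
by apply: eB; rewrite /= ?subrr ?normr0 // addrAC subrr add0r gtr0_norm //; lra.
Qed.

Lemma ray_bdH A u (Y : R) : uhp u -> ~ A u ->
  (forall y, Y <= y -> A (u.1, y)) -> exists s, bdH A (u.1, s).
Proof.
move=> u2 Au aboveY; have y0 : 0 < u.2 := u2.
pose T := [set y | u.2 <= y /\ ~ A (u.1, y)].
have Tu : T u.2 by split; rewrite -?surjective_pairing.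
have T_ub : ubound T Y.
  by move=> y [_ Ay]; rewrite leNgt; apply/negP => /ltW /aboveY.
have supT : has_sup T by split; [exists u.2 | exists Y].
have le_sup := sup_upper_bound supT.
have us : u.2 <= sup T := le_sup _ Tu.
exists (sup T); split; [rewrite /uhp /=; lra | split].
  apply: closure_from_above => s s0; apply: contrapT => Ass.
  by have := le_sup (sup T + s) (conj (ler_wpDr (ltW s0) us) Ass); lra.
move=> /nbhs_boxP[e e0 eA].
have [y Ty ey] := sup_adherent e0 supT; have ys := le_sup _ Ty.
by apply: Ty.2; apply: eA; rewrite /= ?subrr ?normr0 // ler0_norm; lra.
Qed.

End VerticalRays.

Section OutsideK.
Variable R : realType.
Variable G : set 'M[R]_2.
Hypothesis Gfuchsian : fuchsian G.
Hypothesis infty_ordinary : ordinary G None.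

Lemma Kset_above (x : R) : exists Y, forall y, Y <= y -> Kset G (x, y).
Proof.
have [rho rho0 rho_le] := mc_bounded_below Gfuchsian infty_ordinary x.
exists (1 + rho^-1) => y Yy; have rinv : 0 < rho^-1 by rewrite invr_gt0.
have y1 : 1 <= y by lra.
have ry : 1 < rho * y.
  by rewrite -(mulfV (lt0r_neq0 rho0)) ltr_pM2l //; lra.
split=> [|g Gg _ cg]; first by rewrite /uhp /=; lra.
split; first by rewrite /uhp /=; lra.
rewrite ltNge; apply/negP; rewrite /den /= => gy.
have /(rho_le g Gg cg) : den g (x, 1) <= 1.
  have : mc g ^+ 2 * 1 <= mc g ^+ 2 * y ^+ 2 by rewrite ler_wpM2l ?sqr_ge0 ?exprn_ege1.
  by rewrite /den /= mulr1; rewrite exprMn in gy; lra.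
have : (`|mc g| * y) ^+ 2 <= 1.
  by rewrite exprMn real_normK ?num_real // -exprMn; have := sqr_ge0 (mc g * x + md g); lra.
move=> cy1 rc; have : 1 < `|mc g| * y by nra.
by rewrite expr2 in cy1; nra.
Qed.

Variables alpha beta : R.
Hypothesis bdK_strip : forall z, bdH (Kset G) z -> alpha <= z.1 <= beta.

Lemma notK_re_strip u : uhp u -> ~ Kset G u -> alpha <= u.1 <= beta.
Proof.
move=> u2 Ku; have [Y KY] := Kset_above u.1.
by have [s /bdK_strip] := ray_bdH u2 Ku KY.
Qed.

Lemma Kset_outside_strip z : uhp z -> z.1 < alpha \/ beta < z.1 -> Kset G z.
Proof.
move=> z2 out; apply: contrapT => /(notK_re_strip z2) /andP[].
by case: out; lra.
Qed.

End OutsideK.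

Lemma int_unit_cases (R : numDomainType) (n : int) :
  n != 0 -> 1 <= (n%:~R : R) \/ (n%:~R : R) <= -1.
Proof.
rewrite neq_lt => /orP[n0|n0]; [right | left]; last by rewrite ler1z -gtz0_ge1.
by rewrite -lerN2 opprK -intrN ler1z -gtz0_ge1 oppr_gt0.
Qed.

Section StripTranslates.
Variable R : realType.
Implicit Types (g h : 'M[R]_2) (z u : R * R) (n m : int).
Variable G : set 'M[R]_2.
Hypothesis Gfuchsian : fuchsian G.
Hypothesis no_parabolic : forall g, G g -> ~ parabolic g.
Hypothesis infty_ordinary : ordinary G None.
Variables alpha beta alpha' beta' : R.
Hypothesis bdK_strip : forall z, bdH (Kset G) z -> alpha <= z.1 <= beta.
Hypothesis alpha'_lt : alpha' < alpha.
Hypothesis beta_lt : beta < beta'.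

Definition tpow n : 'M[R]_2 := transl (n%:~R * (beta' - alpha')).

Lemma det_tpow n : \det (tpow n) = 1. Proof. exact: det_transl. Qed.
Lemma mc_tpow n : mc (tpow n) = 0. Proof. exact: mc_transl. Qed.
Lemma mob_tpow n z : mob (tpow n) z = (z.1 + n%:~R * (beta' - alpha'), z.2).
Proof. exact: mob_transl. Qed.
Lemma tpowD n m : tpow n *m tpow m = tpow (n + m).
Proof. by rewrite /tpow translD intrD mulrDl. Qed.
Lemma mob_tpow_im n z : (mob (tpow n) z).2 = z.2.
Proof. by rewrite mob_tpow. Qed.
Lemma tpow0 : tpow 0 = 1. Proof. by rewrite /tpow mul0r transl0. Qed.
Lemma tpow1 : tpow 1 = transl (beta' - alpha'). Proof. by rewrite /tpow mulr1z mul1r. Qed.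
Lemma adj2_tpow n : adj2 (tpow n) = tpow (- n).
Proof. by rewrite /tpow adj2_transl intrN mulNr. Qed.

Lemma shift_outside_strip (x : R) n : alpha' <= x <= beta' -> n != 0 ->
  x + n%:~R * (beta' - alpha') < alpha \/ beta < x + n%:~R * (beta' - alpha').
Proof.
move=> /andP[x1 x2] /(int_unit_cases R) n1; have l0 : 0 <= beta' - alpha' by lra.
have [ns|ns] : beta' - alpha' <= n%:~R * (beta' - alpha') \/
                    n%:~R * (beta' - alpha') <= - (beta' - alpha').
  case: n1 => n1; [left | right]; have := ler_wpM2r l0 n1; by rewrite ?mul1r ?mulN1r.
- right; apply: (lt_le_trans beta_lt).
  by have := lerD x1 ns; rewrite addrC subrK.
- left; apply: le_lt_trans alpha'_lt.
  by have := lerD x2 ns; rewrite opprB addrCA subrr addr0.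
Qed.

Definition Wtranslates := [set z | exists n, Wset G alpha' beta' (mob (tpow n) z)].

Lemma Wtranslates_K z : Wtranslates z -> Kset G z.
Proof.
move=> [n [Kw /andP[w1 w1']]].
have [n0|n0] := eqVneq n 0; first by move: Kw; rewrite n0 tpow0 mob1.
have z2 : uhp z by move: Kw.1; rewrite mob_tpow.
move: w1 w1'; rewrite mob_tpow /= => w1 w1'.
apply: (Kset_outside_strip Gfuchsian infty_ordinary bdK_strip z2).
set w := z.1 + _ in w1 w1'.
have -> : z.1 = w + (- n)%:~R * (beta' - alpha') by rewrite /w intrN mulNr addrK.
by apply: shift_outside_strip; rewrite ?oppr_eq0 // (ltW w1) ltW.
Qed.

Lemma Wtranslates_tpow z n : Wtranslates z -> Wtranslates (mob (tpow n) z).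
Proof.
move=> [m Wm]; exists (m - n).
suff -> : mob (tpow (m - n)) (mob (tpow n) z) = mob (tpow m) z by [].
by rewrite !mob_tpow /= intrB; congr pair; ring.
Qed.

Lemma notK_tpow u n : uhp u -> ~ Kset G u -> n != 0 -> Kset G (mob (tpow n) u).
Proof.
move=> u2 Ku n0; have /andP[u1 u1'] := notK_re_strip Gfuchsian infty_ordinary bdK_strip u2 Ku.
apply: (Kset_outside_strip Gfuchsian infty_ordinary bdK_strip); first by rewrite mob_tpow.
rewrite mob_tpow; apply: shift_outside_strip n0.
by rewrite (le_trans (ltW alpha'_lt) u1) (le_trans u1' (ltW beta_lt)).
Qed.

Lemma G_moves_K_down g z : G g -> ~ psl_id g -> Kset G z ->
  [/\ uhp (mob g z), ~ Kset G (mob g z) & (mob g z).2 < z.2].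
Proof.
move=> Gg g1 [z2 Kz]; have dg := G_det Gfuchsian Gg.
have cg : mc g != 0.
  by apply/eqP => /(mc0_psl_id Gfuchsian infty_ordinary no_parabolic Gg).
have gz : 1 < den g z := (Kz g Gg g1 cg).2.
split; [exact: mob_uhp | move=> [_ Kgz] | exact/den_gt1_im].
have a1 : ~ psl_id (adj2 g) by move/(psl_id_adj2 dg).
have ca : mc (adj2 g) != 0 by rewrite mc_adj2 oppr_eq0.
have agz : 1 < den (adj2 g) (mob g z) := (Kgz _ (G_adj2 Gfuchsian Gg) a1 ca).2.
by have := den_adj2_mob dg z2; nra.
Qed.

(* Words g_1 t^n_1 g_2 t^n_2 ... g_k t^n_k with nontrivial g_i in G and
   n_1, ..., n_(k-1) nonzero. *)
Inductive alt_word : 'M[R]_2 -> Prop :=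
  | AltWord1 g n of G g & ~ psl_id g : alt_word (g *m tpow n)
  | AltWordS g n e of G g & ~ psl_id g & n != 0 & alt_word e :
      alt_word (g *m (tpow n *m e)).

Definition normal_form g := exists n,
  [\/ g = tpow n, g = - tpow n | exists2 e, alt_word e & g = tpow n *m e].

Lemma det_alt_word e : alt_word e -> \det e = 1.
Proof.
elim=> {e} [g n Gg _|g n e Gg _ _ _ de];
  by rewrite !det_mulmx ?de det_tpow (G_det Gfuchsian Gg) !mulr1.
Qed.

Lemma alt_wordN e : alt_word e -> alt_word (- e).
Proof.
case=> [g n Gg g1|g n e' Gg g1 n0 ae]; rewrite -mulNmx; constructor => //;
  by [apply: GN | move/psl_idN].
Qed.

Lemma alt_word_normal_form e : alt_word e -> normal_form e.
Proof. by exists 0; apply: Or33; exists e; rewrite ?tpow0 ?mul1mx. Qed.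

Lemma normal_formN h : normal_form h -> normal_form (- h).
Proof.
move=> [n [->|->|[e ae ->]]]; exists n; [apply: Or32 | apply: Or31 | apply: Or33].
- by [].
- by rewrite opprK.
- by exists (- e); rewrite ?mulmxN //; apply: alt_wordN.
Qed.

Lemma normal_form_psl_id g h : psl_id g -> normal_form h -> normal_form (g *m h).
Proof. by move=> /(psl_id_mulmx h) [] -> // /normal_formN. Qed.

Lemma normal_form_tpow n g : normal_form g -> normal_form (tpow n *m g).
Proof.
move=> [m [->|->|[e ae ->]]]; exists (n + m); rewrite ?mulmxN ?mulmxA tpowD.
- exact: Or31.
- exact: Or32.
- by apply: Or33; exists e.
Qed.

Lemma normal_form_alt g e : G g -> alt_word e -> normal_form (g *m e).
Proof.
move=> Gg [h n Gh h1|h n e' Gh h1 n0 ae']; rewrite mulmxA;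
  have [gh1|gh1] := pselect (psl_id (g *m h)).
- by apply: normal_form_psl_id => //; exists n; apply: Or31.
- by apply/alt_word_normal_form/AltWord1 => //; apply: GM.
- by apply: normal_form_psl_id => //; exists n; apply: Or33; exists e'.
- by apply/alt_word_normal_form/AltWordS => //; apply: GM.
Qed.

Lemma normal_form_G g h : G g -> normal_form h -> normal_form (g *m h).
Proof.
move=> Gg nh; have [g1|g1] := pselect (psl_id g); first exact: normal_form_psl_id.
move: nh => [n [->|->|[e ae ->]]].
- exact/alt_word_normal_form/AltWord1.
- by rewrite mulmxN; apply/normal_formN/alt_word_normal_form/AltWord1.
- have [->|n0] := eqVneq n 0; first by rewrite tpow0 mul1mx; apply: normal_form_alt.
  exact/alt_word_normal_form/AltWordS.
Qed.

Inductive word : 'M[R]_2 -> Prop :=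
  | Word1 : word 1
  | WordG g h of G g & word h : word (g *m h)
  | WordT n h of word h : word (tpow n *m h).

Lemma det_word g : word g -> \det g = 1.
Proof.
elim=> [|x y Gx _ dy|n y _ dy]; rewrite ?det1 // det_mulmx dy mulr1.
  exact: G_det Gx.
exact: det_tpow.
Qed.

Lemma word_mul g h : word g -> word h -> word (g *m h).
Proof.
move=> wg wh; elim: wg => [|g' g'' Gg' _ IH|n g' _ IH]; rewrite ?mul1mx // -mulmxA.
  exact: WordG.
exact: WordT.
Qed.

Lemma word_adj2 g : word g -> word (adj2 g).
Proof.
elim=> [|x y Gx _ IH|n y _ IH]; first by rewrite adj21; apply: Word1.
- rewrite adj2M; apply: word_mul IH _; rewrite -[adj2 x]mulmx1.
  by apply: WordG (G_adj2 Gfuchsian Gx) Word1.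
- rewrite adj2M adj2_tpow; apply: word_mul IH _; rewrite -[tpow _]mulmx1.
  exact: WordT Word1.
Qed.

Lemma Gamma_W_word g : Gamma_W G alpha' beta' g -> word g.
Proof.
elim=> [h [[Gh _ _ _]|->]||h _ IH|h k _ IHh _ IHk|h _ IH].
- by rewrite -[h]mulmx1; apply: WordG Gh Word1.
- by rewrite -tpow1 -[tpow 1]mulmx1; apply: WordT Word1.
- exact: Word1.
- have -> : - h = - 1 *m h by rewrite mulNmx mul1mx.
  exact: WordG (GN Gfuchsian (G1 Gfuchsian)) IH.
- exact: word_mul.
- by rewrite invmx_adj2 ?det_word //; apply: word_adj2.
Qed.

Lemma word_normal_form g : word g -> normal_form g.
Proof.
elim=> [|x y Gx _|n y _]; last exact: normal_form_tpow.
  by exists 0; apply: Or31; rewrite tpow0.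
exact: normal_form_G.
Qed.

Lemma alt_word_lowers e z : alt_word e -> Wtranslates z ->
  [/\ uhp (mob e z), ~ Kset G (mob e z) & (mob e z).2 < z.2].
Proof.
move=> ae Wz; have z2 : uhp z := (Wtranslates_K Wz).1.
elim: ae => [g n Gg g1|g n e' Gg g1 n0 ae' [e'z2 Ke'z e'z_lt]];
  have dg := G_det Gfuchsian Gg.
- have := G_moves_K_down Gg g1 (Wtranslates_K (Wtranslates_tpow n Wz)).
  by rewrite mobM ?det_tpow // mob_tpow_im.
- have [gz2 Kgz gz_lt] := G_moves_K_down Gg g1 (notK_tpow e'z2 Ke'z n0).
  have de' := det_alt_word ae'.
  rewrite mobM ?det_mulmx ?det_tpow ?de' ?mulr1 // mobM ?det_tpow //.
  by split => //; apply: lt_trans gz_lt _; rewrite mob_tpow_im.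
Qed.

Lemma Gamma_W_ext g : Gamma_W G alpha' beta' g -> mc g != 0 ->
  Wset G alpha' beta' `<=` isom_ext g.
Proof.
move=> /Gamma_W_word wg cg z Wz; have dg := det_word wg; have z2 : uhp z := Wz.1.1.
have Wtranslates_z : Wtranslates z by exists 0; rewrite tpow0 mob1.
have [n [gE|gE|[e ae gE]]] := word_normal_form wg.
- by move: cg; rewrite gE mc_tpow eqxx.
- by move: cg; rewrite gE mcN mc_tpow oppr0 eqxx.
split => //; apply/(den_gt1_im dg z2).
have [_ _ ez_lt] := alt_word_lowers ae Wtranslates_z.
by rewrite gE mobM ?det_tpow ?(det_alt_word ae) // mob_tpow.
Qed.

End StripTranslates.

Lemma closure_sub_closed (T : topologicalType) (A B : set T) :
  A `<=` B -> closed B -> closure A `<=` B.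
Proof. by move=> AB cB; rewrite closureE; apply: smallest_sub. Qed.

Lemma convex_comb_strict (R : realDomainType) (a b x y t : R) :
  a <= x <= b -> a <= y <= b -> x != y -> 0 < t < 1 -> a < t * x + (1 - t) * y < b.
Proof.
move=> /andP[x1 x2] /andP[y1 y2]; rewrite neq_lt => /orP[] xy /andP[t0 t1].
  by apply/andP; split; nra.
by apply/andP; split; nra.
Qed.

Section Boundaries.
Variable R : realType.
Implicit Types (g h : 'M[R]_2) (z p q : R * R).
Variable G : set 'M[R]_2.
Hypothesis Gfuchsian : fuchsian G.
Hypothesis no_parabolic : forall g, G g -> ~ parabolic g.
Hypothesis infty_ordinary : ordinary G None.
Variables alpha beta alpha' beta' : R.
Hypothesis bdK_strip : forall z, bdH (Kset G) z -> alpha <= z.1 <= beta.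
Hypothesis alpha'_lt : alpha' < alpha.
Hypothesis beta_lt : beta < beta'.

Let W := Wset G alpha' beta'.

Lemma bdH_K_sub_W : bdH (Kset G) `<=` bdH W.
Proof.
move=> z [z2 [clK intK]]; have /andP[z1 z1'] := bdK_strip (conj z2 (conj clK intK)).
have strip : nbhs z [set q | alpha' < q.1 < beta'].
  by apply: nbhs_strip; rewrite (lt_le_trans alpha'_lt z1) (le_lt_trans z1' beta_lt).
split=> //; split; last by apply: contra_not intK; apply: interiorS => ? [].
move=> B /(filterI strip) /clK [q [Kq [sq Bq]]].
by exists q.
Qed.

Lemma closure_W_sub p : closure W p ->
  (forall g, G g -> ~ psl_id g -> mc g != 0 -> 1 <= den g p) /\ alpha' <= p.1 <= beta'.
Proof.
move=> Wp; split=> [g Gg g1 cg|].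
  apply: (closure_sub_closed (B := den g @^-1` [set x | 1 <= x])) Wp.
    by move=> q [[_ Kq] _]; exact: ltW (Kq g Gg g1 cg).2.
  by apply: (continuous_closedP _).1 (@den_continuous R g) _ _; apply: closed_ge.
have strip : [set q : R * R | alpha' <= q.1 <= beta'] =
    fst @^-1` [set x | alpha' <= x] `&` fst @^-1` [set x | x <= beta'].
  by apply/seteqP; split=> q /andP.
apply: (closure_sub_closed (B := [set q : R * R | alpha' <= q.1 <= beta'])) Wp.
  by move=> q [_ /andP[q1 q1']]; rewrite /= !ltW.
have fst_cont : continuous (@fst R R) by move=> ?; apply: cvg_fst.
rewrite strip; apply: closedI; apply: (continuous_closedP _).1 fst_cont _ _.
  exact: closed_ge.
exact: closed_le.
Qed.

Lemma bdH_K_of_den_ge1 z : uhp z -> ~ Kset G z ->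
  (forall g, G g -> ~ psl_id g -> mc g != 0 -> 1 <= den g z) -> bdH (Kset G) z.
Proof.
move=> z2 Kz den_ge1; split=> //; split; last by move/interior_subset.
have y0 : 0 < z.2 := z2.
rewrite [z]surjective_pairing; apply: closure_from_above => s s0.
have zs2 : uhp (z.1, z.2 + s) by rewrite /uhp /=; lra.
split=> // g Gg g1 cg; split=> //; change (1 < den g (z.1, z.2 + s)).
have -> : den g (z.1, z.2 + s) = den g z + mc g ^+ 2 * (2 * z.2 * s + s ^+ 2).
  by rewrite /den /=; ring.
have c2 : 0 < mc g ^+ 2 by rewrite exprn_even_gt0.
have := den_ge1 g Gg g1 cg; have : 0 < 2 * z.2 * s + s ^+ 2 by nra.
by nra.
Qed.

Section Arc.
Variables (g : 'M[R]_2) (p q : R * R).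
Hypotheses (gW : Gamma_W G alpha' beta' g) (cg : mc g != 0) (pq : p.1 != q.1).
Hypotheses (Ip : isom_sphere g p) (Iq : isom_sphere g q).
Hypotheses (Wp : closure W p) (Wq : closure W q).

Let z := sphere_arc g p q.

Lemma arc_den d t : 0 <= t <= 1 -> den d (z t) = t * den d p + (1 - t) * den d q.
Proof.
by move=> t01; apply: den_affine_on_sphere cg Ip.2 Iq.2 (sphere_arcP cg Ip Iq t01).2 _.
Qed.

Lemma arc_den_ge1 t : 0 <= t <= 1 ->
  forall d, G d -> ~ psl_id d -> mc d != 0 -> 1 <= den d (z t).
Proof.
move=> t01 d Gd d1 cd; rewrite arc_den //; move: t01 => /andP[t0 t1].
have := (closure_W_sub Wp).1 d Gd d1 cd; have := (closure_W_sub Wq).1 d Gd d1 cd.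
by nra.
Qed.

Lemma arc_notK t : 0 < t < 1 -> ~ Kset G (z t).
Proof.
move=> t01 Kz; have t01' : 0 <= t <= 1 by move: t01 => /andP[? ?]; rewrite !ltW.
have Wz : W (z t).
  split=> //; apply: convex_comb_strict t01 => //.
  - exact: (closure_W_sub Wp).2.
  - exact: (closure_W_sub Wq).2.
have : 1 < den g (z t).
  exact: (Gamma_W_ext Gfuchsian no_parabolic infty_ordinary bdK_strip
    alpha'_lt beta_lt gW cg Wz).2.
by rewrite [den g _](sphere_arcP cg Ip Iq t01').2 ltxx.
Qed.

Lemma arc_bdK t : 0 < t < 1 -> bdH (Kset G) (z t).
Proof.
move=> t01; have t01' : 0 <= t <= 1 by move: t01 => /andP[? ?]; rewrite !ltW.
exact: bdH_K_of_den_ge1 (sphere_arcP cg Ip Iq t01').1 (arc_notK t01) (arc_den_ge1 t01').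
Qed.

Lemma arc_witness : exists d, [/\ G d, ~ psl_id d, mc d != 0, den d p = 1 & den d q = 1].
Proof.
have half : (0 : R) < 1 / 2 < (1 : R) by apply/andP; split; lra.
have half' : (0 : R) <= 1 / 2 <= (1 : R) by apply/andP; split; lra.
have [z2 _] := sphere_arcP cg Ip Iq half'.
have [d [Gd d1 cd dz]] : exists d, [/\ G d, ~ psl_id d, mc d != 0 & ~ isom_ext d (z (1 / 2))].
  apply: contrapT => all_ext; apply: (arc_notK half); split=> // d Gd d1 cd.
  by apply: contrapT => dz; apply: all_ext; exists d.
have dz1 : den d (z (1 / 2)) <= 1 by rewrite leNgt; apply/negP => ?; apply: dz.
move: dz1; rewrite arc_den //.
have := (closure_W_sub Wp).1 d Gd d1 cd; have := (closure_W_sub Wq).1 d Gd d1 cd.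
move=> dq dp dz1; exists d; split=> //; lra.
Qed.

End Arc.

Lemma REL_sub_REL_W : REL G `<=` REL_W G alpha' beta'.
Proof.
move=> _ [g [gR ->]]; have [_ _ cg [z [w [[Iz bz] [Iw bw] zw]]]] := gR.
exists g; split=> //; first by apply: gen_base; left.
by exists z, w; split=> //; split=> //; apply: bdH_K_sub_W.
Qed.

Lemma REL_W_sub_REL : REL_W G alpha' beta' `<=` REL G.
Proof.
move=> _ [g [gW cg [p [q [[Ip [_ [Wp _]]] [Iq [_ [Wq _]]] pq]]] ->]].
have pq1 : p.1 != q.1 by apply/eqP => /(isom_sphere_re_inj cg Ip Iq).
have [d [Gd d1 cd dp dq]] := arc_witness gW cg pq1 Ip Iq Wp Wq.
have Idp : isom_sphere d p by split; [exact: Ip.1 | exact: dp].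
have Idq : isom_sphere d q by split; [exact: Iq.1 | exact: dq].
have gd := isom_sphere_eq cg cd pq1 Ip Iq Idp Idq.
exists d; split=> //; split=> //.
pose z := sphere_arc g p q.
have arc t : 0 < t < 1 -> (isom_sphere d `&` bdH (Kset G)) (z t).
  move=> t01; split; last exact: arc_bdK.
  by rewrite -gd; apply: sphere_arcP => //; move: t01 => /andP[? ?]; rewrite !ltW.
exists (z (1 / 3)), (z (2 / 3)); split; [apply: arc | apply: arc | ].
- by apply/andP; split; lra.
- by apply/andP; split; lra.
- by move=> /(congr1 fst) /= e; move/eqP: pq1; apply; lra.
Qed.

End Boundaries.

Unset Implicit Arguments.

Theorem lemma4p7 (R : realType) (G : set 'M[R]_2)
  (hF : fuchsian G) (hGF : geom_finite G) (hnc : ~ cocompact G)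
  (hhyp : exists g, G g /\ hyperbolic g)
  (hpar : forall g, G g -> ~ parabolic g)
  (harea : infinite_area G) (hord : ordinary_nbhs_infty G)
  (alpha beta alpha' beta' : R)
  (hab : forall z, bdH (Kset G) z -> alpha <= z.1 <= beta)
  (halpha : forall a, (forall z, bdH (Kset G) z -> a <= z.1) -> a <= alpha)
  (hbeta : forall b, (forall z, bdH (Kset G) z -> z.1 <= b) -> beta <= b)
  (ha' : alpha' < alpha) (hb' : beta < beta') :
  REL G = REL_W G alpha' beta'.
Proof.
have infty_ordinary : ordinary G None by case: hord => M [].
apply/seteqP; split; first exact: (REL_sub_REL_W hab ha' hb').
exact: (REL_W_sub_REL hF hpar infty_ordinary hab ha' hb').
Qed.
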